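(* $\mathsf{FOR}$ does not express Epstein relations: it is not the case that for all $\varphi,\psi\in\mathsf{FOR}$ there is $\chi\in\mathsf{FOR}$ such that for every Epstein relation $\mathfrak{R}$, $\langle\varphi,\psi\rangle\in\mathfrak{R}$ iff $\mathfrak{R}\vDash\chi$. In particular, there is no $\chi\in\mathsf{FOR}$ such that for every Epstein relation $\mathfrak{R}$, $\mathfrak{R}\vDash\chi$ iff $\langle\top,\bot\rangle\in\mathfrak{R}$.
   Context: Language: propositional letters $\Phi=\{p_0,p_1,\dots\}$; connectives $\neg$, $\lor,\wedge,\to,\leftrightarrow,\vartriangle,\looparrowright$; $\mathsf{FOR}$ the set of all formulas; $\top:=p_0\lor\neg p_0$, $\bot:=\neg(p_0\lor\neg p_0)$. An Epstein model is $\langle v,\mathfrak{R}\rangle$ with $v:\Phi\to\{0,1\}$ and $\mathfrak{R}\subseteq\mathsf{FOR}^2$ (an Epstein relation); truth: letters via $v$, boolean connectives classical, $\langle v,\mathfrak{R}\rangle\vDash\varphi\vartriangle\psi$ iff both true and $\langle\varphi,\psi\rangle\in\mathfrak{R}$; $\langle v,\mathfrak{R}\rangle\vDash\varphi\looparrowright\psi$ iff $\varphi\to\psi$ true and $\langle\varphi,\psi\rangle\in\mathfrak{R}$. $\mathfrak{R}\vDash\chi$ iff $\langle v,\mathfrak{R}\rangle\vDash\chi$ for every valuation $v$. *)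

From Stdlib Require Import Bool.

Inductive form : Type :=
| Var  : nat -> form
| Neg  : form -> form
| Or   : form -> form -> form
| And  : form -> form -> form
| Imp  : form -> form -> form
| Iff  : form -> form -> form
| Tri  : form -> form -> form
| Loop : form -> form -> form.

Definition top : form := Or (Var 0) (Neg (Var 0)).
Definition bot : form := Neg (Or (Var 0) (Neg (Var 0))).

Definition epstein_rel := form -> form -> Prop.

Fixpoint sat (v : nat -> bool) (R : epstein_rel) (f : form) : Prop :=
  match f with
  | Var n => v n = true
  | Neg a => ~ sat v R a
  | Or a b => sat v R a \/ sat v R b
  | And a b => sat v R a /\ sat v R b
  | Imp a b => sat v R a -> sat v R b
  | Iff a b => (sat v R a <-> sat v R b)
  | Tri a b => (sat v R a /\ sat v R b) /\ R a b
  | Loop a b => (sat v R a -> sat v R b) /\ R a b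
  end.

Definition rel_valid (R : epstein_rel) (chi : form) : Prop :=
  forall v : nat -> bool, sat v R chi.

(** Adding to an Epstein relation a pair [(a, b)] such that [a -> b] is never
    true changes the truth value of no formula: the new pair could only make
    [Tri a b] or [Loop a b] true, and both already fail on their first conjunct
    ([a /\ b] entails [a -> b]).  The pair [(top, bot)] is of this kind, so the
    empty relation and [{(top, bot)}] validate the same formulas although only
    the second contains [(top, bot)]. *)

Definition rel_add (R : epstein_rel) (a b : form) : epstein_rel :=
  fun c d => R c d \/ (c = a /\ d = b).

Lemma sat_top v R : sat v R top.
Proof. simpl. destruct (v 0); [left; reflexivity | right; discriminate]. Qed.

Lemma sat_bot v R : ~ sat v R bot.
Proof. intro H; apply H; exact (sat_top v R). Qed.

Section InertPair.

Variables (R : epstein_rel) (a b : form).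
Hypothesis a_imp_b_false :
  forall v, ~ (sat v (rel_add R a b) a -> sat v (rel_add R a b) b).

Lemma sat_rel_add f v : sat v (rel_add R a b) f <-> sat v R f.
Proof.
  revert v; induction f as [n | f IHf | f IHf g IHg | f IHf g IHg
    | f IHf g IHg | f IHf g IHg | f IHf g IHg | f IHf g IHg]; intro v; simpl;
    try (specialize (IHf v)); try (specialize (IHg v)); try tauto.
  - unfold rel_add. split; [|tauto].
    intros [[Hf Hg] [HR | [-> ->]]]; [tauto|].
    exfalso; apply (a_imp_b_false v); auto.
  - unfold rel_add. split; [|tauto].
    intros [Himp [HR | [-> ->]]]; [tauto|].
    exfalso; exact (a_imp_b_false v Himp).
Qed.

Lemma rel_valid_rel_add chi : rel_valid (rel_add R a b) chi <-> rel_valid R chi.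
Proof. split; intros H v; apply (sat_rel_add chi v), H. Qed.

End InertPair.

Definition rel_empty : epstein_rel := fun _ _ => False.

Lemma rel_valid_add_top_bot chi :
  rel_valid (rel_add rel_empty top bot) chi <-> rel_valid rel_empty chi.
Proof.
  apply rel_valid_rel_add.
  intros v H; exact (sat_bot _ _ (H (sat_top _ _))).
Qed.

Lemma top_bot_not_definable :
  ~ (exists chi : form, forall R : epstein_rel, (rel_valid R chi <-> R top bot)).
Proof.
  intros [chi Hchi].
  assert (Hadd : rel_valid (rel_add rel_empty top bot) chi).
  { apply Hchi; right; split; reflexivity. }
  apply rel_valid_add_top_bot, Hchi in Hadd.
  exact Hadd.
Qed.

Theorem mainTheorem15 :
  ~ (forall phi psi : form, exists chi : form,
        forall R : epstein_rel, (R phi psi <-> rel_valid R chi))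
  /\
  ~ (exists chi : form,
        forall R : epstein_rel, (rel_valid R chi <-> R top bot)).
Proof.
  split; [| exact top_bot_not_definable].
  intro Hexpr; apply top_bot_not_definable.
  destruct (Hexpr top bot) as [chi Hchi].
  exists chi; intro R; specialize (Hchi R); tauto.
Qed.
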